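(* Let $G$ be an $n$-vertex graph with maximum degree $\Delta$ and arboricity $a$. There is a deterministic distributed algorithm in the LOCAL model that computes a proper edge coloring of $G$ with $\Delta+O(a)$ colors within $O(a\log n)$ rounds.
   Context: LOCAL model: the input graph is the communication network; each vertex is a processor with a unique ID of $O(\log n)$ bits and unbounded local computation; computation proceeds in synchronous rounds, in each of which every vertex may send a message of arbitrary size to each neighbor; running time is the number of rounds until all vertices terminate. Global parameters ($n$, $\Delta$, $a$) are known to all vertices. The arboricity of a graph is the minimum number of forests into which its edge set can be partitioned. In an edge coloring, edges sharing an endpoint receive distinct colors, and both endpoints of an edge know its color. *)

From mathcomp Require Import all_boot.
Set Implicit Arguments. Unset Strict Implicit. Unset Printing Implicit Defensive.

Definition simple_graph n (e : rel 'I_n) := symmetric e /\ irreflexive e.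

Definition deg n (e : rel 'I_n) (v : 'I_n) : nat := #|[set u | e v u]|.

Definition maxdeg n (e : rel 'I_n) : nat := \max_(v : 'I_n) deg e v.

Definition has_cycle n (r : rel 'I_n) : Prop :=
  exists (v : 'I_n) (p : seq 'I_n),
    [/\ uniq (v :: p), 2 <= size p, path r v p & r (last v p) v].

Definition forest_decomp n (e : rel 'I_n) (k : nat) : Prop :=
  exists f : 'I_n -> 'I_n -> nat,
    (forall u v, e u v -> f u v = f v u /\ f u v < k) /\
    (forall j, ~ has_cycle (fun u v => e u v && (f u v == j))).

Definition arboricity n (e : rel 'I_n) (a : nat) : Prop :=
  forest_decomp e a /\ forall k, forest_decomp e k -> a <= k.

(* Deterministic LOCAL algorithm (synchronous, unbounded messages, unbounded
   local computation). Each vertex starts knowing only its ID (global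
   parameters n, Delta, a are built into the algorithm, which may depend on
   them). In every round each vertex sends its message to all neighbours; a
   receiver sees the messages indexed by the sender's ID (equivalently: the
   sender includes its ID in the message). At the end a vertex outputs, for
   each neighbour ID, the colour of the corresponding incident edge. *)
Record LocalAlg := {
  St : Type;
  Msg : Type;
  init : nat -> St;
  send : St -> Msg;
  step : St -> (nat -> option Msg) -> St;
  out : St -> nat -> nat
}.

Fixpoint run (A : LocalAlg) n (e : rel 'I_n) (id : 'I_n -> nat) (r : nat)
  (v : 'I_n) : St A :=
  match r with
  | 0 => init A (id v)
  | r'.+1 =>
      step (run A e id r' v)
        (fun i => match [pick u | e v u && (id u == i)] with
                  | Some u => Some (send (run A e id r' u))
                  | None => None
                  end)
  end.

Definition edge_col (A : LocalAlg) n (e : rel 'I_n) (id : 'I_n -> nat)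
  (R : nat) (v u : 'I_n) : nat := out (run A e id R v) (id u).

Definition proper_edge_coloring n (e : rel 'I_n) (col : 'I_n -> 'I_n -> nat)
  (q : nat) : Prop :=
  [/\ forall u v, e u v -> col u v = col v u,
      forall u v, e u v -> col u v < q
    & forall u v w, e u v -> e u w -> v != w -> col u v != col u w].

From mathcomp Require Import all_boot zify.
Set Implicit Arguments. Unset Strict Implicit. Unset Printing Implicit Defensive.

(* The vertices are first split into layers: for trunc_log n + 1 rounds, every
   still unlayered vertex with at most 4a unlayered neighbours joins the current
   layer. A union of a forests has fewer than 2a|S| edges inside any vertex set S,
   so each round removes at least half of the unlayered vertices; hence every
   vertex gets a layer and has at most 4a neighbours in its own or higher layers.
   The edges are then coloured in O(a (c + 1) log n) slots, in each of which some
   vertices offer one incident edge each: an edge inside a layer is offered by the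
   endpoint whose ID has bit 0 where the two IDs first differ, an edge between
   layers by its lower endpoint, higher layers going first. No vertex offers and
   receives in the same slot, and the edges a vertex has coloured before its own
   offer lead to its own or higher layers. The receiver gives each offered edge
   the least colour free at both endpoints, which is at most Delta + 4a since at
   most Delta colours are used at the receiver and at most 4a at the sender. *)

Lemma card_sep_sum (T : finType) (S : {set T}) (P : pred T) :
  #|[set u in S | P u]| = \sum_(u in S) P u.
Proof.
rewrite -sum1_card [RHS]big_mkcond [LHS]big_mkcond /=.
by apply: eq_bigr => u _; rewrite !inE; case: (u \in S); case: (P u).
Qed.

Definition deg_in n (r : rel 'I_n) (S : {set 'I_n}) (v : 'I_n) : nat :=
  #|[set u in S | r v u]|.

Section Acyclic.
Variables (n : nat) (r : rel 'I_n).
Hypotheses (r_sym : symmetric r) (r_irr : irreflexive r) (r_acyclic : ~ has_cycle r).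

Lemma acyclic_last_nbr_index x0 (s : seq 'I_n) w : uniq s -> sorted r s ->
  w \in s -> r (last x0 s) w -> index w s = (size s).-2.
Proof.
move=> + + ws; case/splitPr: ws => p1 p2 s_uniq s_sorted.
have w_p1 : w \notin p1.
  by move: s_uniq; rewrite uniq_catC /= mem_cat negb_or => /andP[/andP[_ ->]].
have w_path : path r w p2 by move: s_sorted => /cat_sorted2[].
rewrite index_cat (negbTE w_p1) /= eqxx addn0 size_cat last_cat /=.
case: p2 s_uniq s_sorted w_path => [|y [|z q]] s_uniq _ w_path rlast.
- by rewrite r_irr in rlast.
- by rewrite addn2.
- exfalso; apply: r_acyclic; exists w, [:: y, z & q]; split => //.
  by move: s_uniq; rewrite cat_uniq => /and3P[].
Qed.

Lemma acyclic_long_path (S : {set 'I_n}) :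
  (forall x, x \in S -> 1 < deg_in r S x) -> S != set0 ->
  forall k, exists s : seq 'I_n,
    [/\ uniq s, sorted r s, {subset s <= S} & size s = k.+1].
Proof.
move=> deg_gt1 /set0Pn [x0 x0S]; elim=> [|k [s [s_uniq s_sorted sS s_size]]].
  by exists [:: x0]; split => // x; rewrite inE => /eqP ->.
set z := last x0 s.
have zS : z \in S.
  by apply: sS; rewrite /z; case: (s) s_size => // y q _ /=; apply: mem_last.
have [w1 [w2 [w1_nbr w2_nbr w12]]] := card_gt1P (deg_gt1 _ zS).
move: w1_nbr w2_nbr; rewrite !inE => /andP[w1S zw1] /andP[w2S zw2].
have extend w : w \in S -> r z w -> w \notin s -> exists s' : seq 'I_n,
    [/\ uniq s', sorted r s', {subset s' <= S} & size s' = k.+2].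
  move=> wS zw ws; exists (rcons s w); split.
  - by rewrite rcons_uniq ws.
  - by move: s_sorted zw; rewrite /z; case: (s) => //= y q; rewrite rcons_path => -> ->.
  - by move=> x; rewrite mem_rcons inE => /orP[/eqP->|/sS].
  - by rewrite size_rcons s_size.
have [w1s|] := boolP (w1 \in s); last exact: extend.
have [w2s|] := boolP (w2 \in s); last exact: extend.
have := acyclic_last_nbr_index s_uniq s_sorted w1s zw1.
rewrite -(acyclic_last_nbr_index s_uniq s_sorted w2s zw2) => /(congr1 (nth x0 s)).
by rewrite !nth_index // => w12'; rewrite w12' eqxx in w12.
Qed.

Lemma acyclic_has_leaf (S : {set 'I_n}) : S != set0 ->
  exists2 x, x \in S & deg_in r S x <= 1.
Proof.
move=> S0; have [/existsP [x /andP [xS x_leaf]]|/existsPn no_leaf] :=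
  boolP [exists x in S, deg_in r S x <= 1]; first by exists x.
have deg_gt1 x : x \in S -> 1 < deg_in r S x.
  by move=> xS; move: (no_leaf x); rewrite xS ltnNge.
have [s [s_uniq _ _ s_size]] := acyclic_long_path deg_gt1 S0 n.
have := max_card (mem s); rewrite card_ord (card_uniqP s_uniq) s_size; lia.
Qed.

Lemma deg_in_setD1 (S : {set 'I_n}) x v : x \in S ->
  deg_in r S v = r v x + deg_in r (S :\ x) v.
Proof.
move=> xS; rewrite /deg_in (cardsD1 x) inE xS; congr (_ + _).
by apply: eq_card => u; rewrite !inE; case: (u == x); case: (u \in S).
Qed.

Lemma acyclic_deg_sum (S : {set 'I_n}) :
  \sum_(v in S) deg_in r S v <= 2 * (#|S|).-1.
Proof.
have [k S_card] : exists k, #|S| = k by eexists.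
elim: k S S_card => [|k IH] S S_card.
  by move: S_card => /eqP; rewrite cards_eq0 => /eqP ->; rewrite big_set0.
have S0 : S != set0 by rewrite -card_gt0 S_card.
have [x xS x_leaf] := acyclic_has_leaf S0.
set S' := S :\ x.
have S'_card : #|S'| = k by move: S_card; rewrite (cardsD1 x) xS add1n => -[].
have x_nbrs : \sum_(v in S') (r v x : nat) = deg_in r S' x.
  by rewrite /deg_in card_sep_sum; apply: eq_bigr => v _; rewrite r_sym.
have x_deg : deg_in r S x = deg_in r S' x by rewrite (deg_in_setD1 x xS) r_irr.
have x_deg' : deg_in r S' x <= minn 1 k.
  rewrite leq_min -{1}x_deg x_leaf -S'_card /=.
  by apply/subset_leq_card/subsetP => u; rewrite inE => /andP[].
rewrite (big_setD1 x xS) /= -/S'.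
under eq_bigr => v _ do rewrite (deg_in_setD1 v xS).
rewrite big_split /= x_nbrs x_deg -/S' S_card.
have := IH _ S'_card; rewrite S'_card.
by move: (\sum_(i in S') _) => T; lia.
Qed.

End Acyclic.

Section ForestDecomposition.
Variables (n k : nat) (e : rel 'I_n).
Hypotheses (e_simple : simple_graph e) (e_forests : forest_decomp e k).

Lemma forest_decomp_deg_sum (S : {set 'I_n}) :
  \sum_(v in S) deg_in e S v <= k * (2 * (#|S|).-1).
Proof.
have [[e_sym e_irr] [f [f_ok f_acyclic]]] := (e_simple, e_forests).
pose forest j : rel 'I_n := fun u v => e u v && (f u v == j).
have deg_split v : deg_in e S v <= \sum_(j < k) deg_in (forest j) S v.
  rewrite /deg_in card_sep_sum.
  under [X in _ <= X]eq_bigr => j _ do rewrite card_sep_sum.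
  rewrite exchange_big /=; apply: leq_sum => u _.
  have [evu|] := boolP (e v u) => //=.
  have [_ f_lt] := f_ok _ _ evu.
  by rewrite (bigD1 (Ordinal f_lt)) //= /forest evu eqxx.
apply: (@leq_trans (\sum_(v in S) \sum_(j < k) deg_in (forest j) S v)).
  by apply: leq_sum => v _; apply: deg_split.
rewrite exchange_big /=.
apply: (@leq_trans (\sum_(j < k) 2 * (#|S|).-1)); last by rewrite sum_nat_const card_ord.
apply: leq_sum => j _; apply: (@acyclic_deg_sum _ (forest j) _ _ (f_acyclic j)).
- move=> u v; rewrite /forest e_sym.
  by have [evu|] := boolP (e v u) => //=; have [-> _] := f_ok _ _ evu.
- by move=> u; rewrite /forest e_irr.
Qed.

Lemma forest_decomp_high_deg (S : {set 'I_n}) :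
  2 * #|[set v in S | 4 * k < deg_in e S v]| <= #|S|.
Proof.
have high_deg : #|[set v in S | 4 * k < deg_in e S v]| * (4 * k).+1 <=
    \sum_(v in S) deg_in e S v.
  rewrite card_sep_sum big_distrl /=; apply: leq_sum => v _.
  by case: ltnP; rewrite ?mul1n.
have := leq_trans high_deg (forest_decomp_deg_sum S).
by move: (#|[set v in S | _]|) (#|S|) => h s; nia.
Qed.

End ForestDecomposition.

Definition mex (s : seq nat) : nat := find (fun x => x \notin s) (iota 0 (size s).+1).

Lemma has_mex s : has (fun x => x \notin s) (iota 0 (size s).+1).
Proof.
apply/negPn/negP => /hasPn all_in.
have := uniq_leq_size (iota_uniq 0 (size s).+1) (fun x xi => negbNE (all_in x xi)).
by rewrite size_iota ltnn.
Qed.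

Lemma mex_le s : mex s <= size s.
Proof. by have := has_mex s; rewrite has_find size_iota. Qed.

Lemma mex_notin s : mex s \notin s.
Proof. by have := nth_find 0 (has_mex s); rewrite -/(mex s) nth_iota ?ltnS ?mex_le. Qed.

Definition bit (x b : nat) : bool := odd (x %/ 2 ^ b).

Lemma eq_from_bits B x y : x < 2 ^ B -> y < 2 ^ B ->
  (forall b, b < B -> bit x b = bit y b) -> x = y.
Proof.
elim: B x y => [|B IH] x y; first by rewrite expn0 !ltnS !leqn0 => /eqP-> /eqP->.
move=> x_lt y_lt same_bits.
have half_eq : x./2 = y./2.
  rewrite -!divn2; apply: IH; rewrite ?ltn_divLR -?expnSr // => b bB.
  by have := same_bits b.+1 bB; rewrite /bit expnS -!divnMA mulnC.
have := same_bits 0 isT; rewrite /bit expn0 !divn1 => odd_eq.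
by rewrite -(odd_double_half x) -(odd_double_half y) half_eq odd_eq.
Qed.

Definition first_diff_bit (B x y : nat) : nat :=
  find (fun b => bit x b != bit y b) (iota 0 B).

Lemma first_diff_bitC B x y : first_diff_bit B x y = first_diff_bit B y x.
Proof. by apply: eq_find => b; rewrite eq_sym. Qed.

Lemma first_diff_bitP B x y : x < 2 ^ B -> y < 2 ^ B -> x != y ->
  first_diff_bit B x y < B /\ bit x (first_diff_bit B x y) != bit y (first_diff_bit B x y).
Proof.
move=> x_lt y_lt xy.
have differ : has (fun b => bit x b != bit y b) (iota 0 B).
  apply/negPn/negP => /hasPn same; case/eqP: xy; apply: (eq_from_bits x_lt y_lt).
  by move=> b bB; apply/eqP/negPn/same; rewrite mem_iota.
have lt_B : first_diff_bit B x y < B by move: differ; rewrite has_find size_iota.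
by split => //; have := nth_find 0 differ; rewrite nth_iota.
Qed.

Section GreedyColoring.
Variable N : nat.

Definition used_colors (col : nat -> option nat) : seq nat := pmap col (iota 0 N).

Definition assign_color (forbidden : nat -> seq nat) (col : nat -> option nat) (i : nat) :
    nat -> option nat :=
  fun j => if j == i then Some (mex (used_colors col ++ forbidden i)) else col j.

Variable forbidden : nat -> seq nat.
Local Notation greedy := (foldl (assign_color forbidden)).

Lemma greedy_notin col l j : j \notin l -> greedy col l j = col j.
Proof.
elim: l col => //= i l IH col; rewrite inE negb_or => /andP[ji jl].
by rewrite IH // /assign_color (negbTE ji).
Qed.

Lemma greedy_mono col l j : col j != None -> greedy col l j != None.
Proof.
elim: l col => [|i l IH] col col_j //=; apply: IH.
by rewrite /assign_color; case: (j == i).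
Qed.

Lemma greedy_spec col l : uniq l -> (forall j, j \in l -> j < N) ->
  forall j, j \in l -> exists x, [/\ greedy col l j = Some x, x \notin forbidden j,
    x <= count (fun i => greedy col l i != None) (iota 0 N) + size (forbidden j) &
    forall j', j' < N -> j' != j -> greedy col l j' != Some x].
Proof.
elim: l col => //= i l IH col /andP[il l_uniq] l_lt.
have l_lt' j : j \in l -> j < N by move=> jl; apply: l_lt; rewrite inE jl orbT.
have {}IH := IH (assign_color forbidden col i) l_uniq l_lt'.
set col' := greedy _ l in IH *.
set x := mex (used_colors col ++ forbidden i).
have col'_i : col' i = Some x by rewrite /col' greedy_notin // /assign_color eqxx.
have x_fresh : x \notin used_colors col ++ forbidden i by apply: mex_notin.
move=> j; rewrite inE => /orP[/eqP ->|jl]; last exact: IH.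
exists x; split => //.
- by move: x_fresh; rewrite mem_cat negb_or => /andP[].
- apply: leq_trans (mex_le _) _; rewrite size_cat leq_add2r /used_colors size_pmap.
  apply: sub_count => k /=; case col_k: (col k) => //= _.
  by apply: greedy_mono; rewrite /assign_color; case: (k == i); rewrite ?col_k.
- move=> j' j'_lt j'i; have [j'l|j'l] := boolP (j' \in l).
    have [y [-> _ _ y_unique]] := IH _ j'l.
    have i_lt : i < N by apply: l_lt; rewrite mem_head.
    apply: contraNneq (y_unique i i_lt _); last by rewrite eq_sym.
    by case=> ->; rewrite col'_i.
  rewrite /col' greedy_notin // /assign_color (negbTE j'i); apply: contraNneq x_fresh => col_j'.
  by rewrite mem_cat /used_colors mem_pmap; apply/orP; left; apply/mapP; exists j';
    rewrite ?mem_iota.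
Qed.

End GreedyColoring.

Section Algorithm.
Variables (n a c : nat).

Definition id_bound := n ^ c.
Definition deg_cap := 4 * a.
Definition nlayers := (trunc_log 2 n).+1.
Definition id_bits := c * nlayers.
Definition color_start := nlayers.+1.
Definition bit_slots := id_bits * deg_cap.
Definition nslots := bit_slots + nlayers * deg_cap.
Definition nrounds := color_start + 2 * nslots.

(* Layer [0] means "not layered yet"; the layers proper are [1 .. nlayers].
   Neighbour data and edge colours are indexed by neighbour IDs. *)
Record state := State {
  st_id : nat;
  st_round : nat;
  st_nbr : nat -> bool;
  st_layer : nat;
  st_nbr_layer : nat -> nat;
  st_color : nat -> option nat }.

Definition nth_opt (j : nat) (l : seq nat) : option nat :=
  if j < size l then Some (nth 0 l j) else None.

(* Slot [s < bit_slots] belongs to bit [s %/ deg_cap]: vertices whose ID has bit 0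
   there offer their [s %% deg_cap]-th same-layer neighbour whose ID first differs
   from theirs at that bit. Later slots go through the layers from the top down,
   vertices of the current layer offering their [s %% deg_cap]-th higher neighbour. *)
Definition offer_target (s : nat) (t : state) : option nat :=
  if s < bit_slots then
    if ~~ bit (st_id t) (s %/ deg_cap) then
      nth_opt (s %% deg_cap)
        [seq i <- iota 0 id_bound | st_nbr t i && (st_nbr_layer t i == st_layer t)
           && (first_diff_bit id_bits (st_id t) i == s %/ deg_cap)]
    else None
  else
    if ((s - bit_slots) %/ deg_cap < nlayers)
       && (st_layer t == nlayers - (s - bit_slots) %/ deg_cap) then
      nth_opt ((s - bit_slots) %% deg_cap)
        [seq i <- iota 0 id_bound | st_nbr t i
           && (nlayers - (s - bit_slots) %/ deg_cap < st_nbr_layer t i)]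
    else None.

Definition offers_to (s : nat) (t : state) (inbox : nat -> option state) : seq nat :=
  [seq i <- iota 0 id_bound | if inbox i is Some t' then
      (offer_target s t' == Some (st_id t)) && (st_color t i == None) else false].

Definition nbr_used_colors (inbox : nat -> option state) (i : nat) : seq nat :=
  if inbox i is Some t' then used_colors id_bound (st_color t') else [::].

Definition accept_offers (s : nat) (t : state) (inbox : nat -> option state) :=
  foldl (assign_color id_bound (nbr_used_colors inbox)) (st_color t) (offers_to s t inbox).

Definition copy_colors (t : state) (inbox : nat -> option state) : nat -> option nat :=
  fun i => if st_color t i is Some x then Some x
           else if inbox i is Some t' then st_color t' (st_id t) else None.

Definition unlayered_nbrs (inbox : nat -> option state) : nat :=
  count (fun i => if inbox i is Some t' then st_layer t' == 0 else false) (iota 0 id_bound).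

(* Rounds [0 .. nlayers - 1] compute the layers, round [nlayers] learns the
   neighbours' layers; afterwards each slot takes two rounds: the receivers of
   offers colour them, then the senders copy the colours. *)
Definition step_state (t : state) (inbox : nat -> option state) : state :=
  State (st_id t) (st_round t).+1 (fun i => isSome (inbox i))
    (if (st_layer t == 0) && (st_round t < nlayers) && (unlayered_nbrs inbox <= deg_cap)
     then (st_round t).+1 else st_layer t)
    (fun i => if inbox i is Some t' then st_layer t' else 0)
    (if st_round t < color_start then st_color t
     else if odd (st_round t - color_start) then copy_colors t inbox
     else accept_offers ((st_round t - color_start)./2) t inbox).

Definition out_color (t : state) (i : nat) : nat :=
  if st_color t i is Some x then x else 0.

Definition edge_coloring_alg : LocalAlg :=
  {| St := state; Msg := state;
     init := fun i => State i 0 (fun _ => false) 0 (fun _ => 0) (fun _ => None);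
     send := fun t => t; step := step_state; out := out_color |}.

Section Run.
Variables (Delta : nat) (e : rel 'I_n) (id : 'I_n -> nat).
Hypotheses (e_simple : simple_graph e) (id_inj : injective id)
  (id_lt : forall v, id v < id_bound) (maxdeg_e : maxdeg e = Delta)
  (e_forests : forest_decomp e a) (a_gt0 : 0 < a).

Local Notation st k v := (run edge_coloring_alg e id k v).

Lemma edge_sym v u : e v u -> e u v.
Proof. by case: e_simple => e_sym _; rewrite e_sym. Qed.

Definition inbox k (v : 'I_n) : nat -> option state :=
  fun i => if [pick u | e v u && (id u == i)] is Some u then Some (st k u) else None.

Lemma run_succ k v : st k.+1 v = step_state (st k v) (inbox k v).
Proof. by []. Qed.

Lemma st_id_run k v : st_id (st k v) = id v.
Proof. by elim: k => //= k ->. Qed.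

Lemma st_round_run k v : st_round (st k v) = k.
Proof. by elim: k => //= k ->. Qed.

Lemma inbox_nbr k v u : e v u -> inbox k v (id u) = Some (st k u).
Proof.
rewrite /inbox; case: pickP => [x /andP[evx /eqP /id_inj ->] //|no_u evu].
by move: (no_u u); rewrite evu eqxx.
Qed.

Lemma inbox_match k v i (f : state -> bool) :
  (if inbox k v i is Some t then f t else false) =
  [exists u, (e v u && f (st k u)) && (id u == i)].
Proof.
rewrite /inbox; case: pickP => [u /andP[evu /eqP ui]|no_u].
  apply/idP/existsP => [fu|[u' /andP[/andP[evu' fu'] /eqP u'i]]].
    by exists u; rewrite evu fu ui eqxx.
  by rewrite -(id_inj (etrans u'i (esym ui))).
apply/esym/existsPn => u; apply/negP => /andP[/andP[evu _] ui].
by move: (no_u u); rewrite evu ui.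
Qed.

Definition is_nbr_id v i := [exists u, e v u && (id u == i)].

Lemma inbox_is_nbr_id k v i : isSome (inbox k v i) = is_nbr_id v i.
Proof.
have -> : isSome (inbox k v i) = if inbox k v i is Some _ then true else false.
  by case: (inbox k v i).
by rewrite inbox_match; apply: eq_existsb => u; rewrite andbT.
Qed.

Lemma count_ids (P : pred 'I_n) :
  count (fun i => [exists u, P u && (id u == i)]) (iota 0 id_bound) = #|[set u | P u]|.
Proof.
set s := [seq id u | u <- enum [set u | P u]].
have s_uniq : uniq s by rewrite map_inj_uniq // enum_uniq.
have -> : #|[set u | P u]| = size s by rewrite size_map -cardE.
rewrite -size_filter; apply: perm_size; apply: uniq_perm; rewrite ?filter_uniq ?iota_uniq // => i.
rewrite mem_filter mem_iota /=; apply/andP/mapP.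
  by case=> /existsP[u /andP[Pu /eqP <-]] _; exists u; rewrite ?mem_enum ?inE.
case=> u; rewrite mem_enum inE => Pu ->; split; last exact: id_lt.
by apply/existsP; exists u; rewrite Pu eqxx.
Qed.

Lemma count_nbr_ids_le v : count (is_nbr_id v) (iota 0 id_bound) <= Delta.
Proof.
rewrite count_ids -maxdeg_e /maxdeg.
exact: (@leq_bigmax_cond _ xpredT (fun w => deg e w) v isT).
Qed.

Local Notation layer k v := (st_layer (st k v)).
Definition final_layer v := layer nlayers v.
Definition unlayered k := [set v | layer k v == 0].

Lemma layer_succ k v : layer k.+1 v =
  if (layer k v == 0) && (k < nlayers) && (deg_in e (unlayered k) v <= deg_cap)
  then k.+1 else layer k v.
Proof.
rewrite run_succ /= st_round_run /unlayered_nbrs.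
rewrite (eq_count (a2 := fun i => [exists u, (e v u && (layer k u == 0)) && (id u == i)]));
  last by move=> i /=; rewrite -(inbox_match k v i (fun t => st_layer t == 0)).
have same : [set u | e v u & layer k u == 0] =i [set u in unlayered k | e v u].
  by move=> u; rewrite !inE andbC.
by rewrite count_ids (eq_card same).
Qed.

Lemma layer_le k v : layer k v <= k.
Proof. by elim: k => // k IH; rewrite layer_succ; case: ifP => // _; apply: leq_trans IH _. Qed.

Lemma layer_stable k m v : k <= m -> layer k v != 0 -> layer m v = layer k v.
Proof.
move=> + layered; elim: m => [|m IH]; first by rewrite leqn0 => /eqP ->.
rewrite leq_eqVlt => /orP[/eqP <- //|]; rewrite ltnS => /IH layer_m.
by rewrite layer_succ layer_m (negbTE layered).
Qed.

Lemma layer_zero_later k m v : k <= m -> layer k v = 0 -> layer m v = 0 \/ k < layer m v.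
Proof.
move=> + unl; elim: m => [|m IH]; first by left.
rewrite leq_eqVlt => /orP[/eqP <-|]; first by left.
rewrite ltnS => km; case: (IH km) => [layer_m|k_lt]; rewrite layer_succ.
  by rewrite layer_m eqxx /=; case: ifP => _; [right; lia | left].
by rewrite (_ : layer m v == 0 = false) /=; [right | apply/negbTE; lia].
Qed.

Lemma layer_final m v : nlayers <= m -> layer m v = final_layer v.
Proof.
elim: m => [|m IH]; first by rewrite leqn0 => /eqP <-.
rewrite leq_eqVlt => /orP[/eqP <- //|]; rewrite ltnS => L_le_m.
by rewrite layer_succ (IH L_le_m) (_ : m < nlayers = false) ?andbF //; apply/negbTE; lia.
Qed.

Lemma layer_eq0 k v : k <= nlayers ->
  (layer k v == 0) = (final_layer v == 0) || (k < final_layer v).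
Proof.
move=> k_le; have [unl|layered] := eqVneq (layer k v) 0.
  by rewrite /final_layer; case: (layer_zero_later k_le unl) => [->|->]; rewrite ?orbT.
rewrite /final_layer (layer_stable k_le layered) (negbTE layered) /=.
by apply/esym/negbTE; rewrite -leqNgt layer_le.
Qed.

Lemma unlayered_succ k : k < nlayers ->
  unlayered k.+1 = [set v in unlayered k | deg_cap < deg_in e (unlayered k) v].
Proof.
move=> k_lt; apply/setP => v; rewrite !inE layer_succ k_lt andbT.
by case: (eqVneq (layer k v) 0) => [->|nz] /=; [case: leqP | apply/negbTE].
Qed.

Lemma card_unlayered k : k <= nlayers -> #|unlayered k| * 2 ^ k <= n.
Proof.
elim: k => [|k IH] k_le; first by rewrite muln1 -[X in _ <= X]card_ord max_card.
have := IH (ltnW k_le); rewrite (unlayered_succ k_le) expnS.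
have := forest_decomp_high_deg e_simple e_forests (unlayered k); rewrite -/deg_cap.
by move: (#|_|) (#|_|) => x y; nia.
Qed.

Lemma final_layer_gt0 v : 0 < final_layer v.
Proof.
have n_lt : n < 2 ^ nlayers := trunc_log_ltn n (isT : 1 < 2).
have : #|unlayered nlayers| = 0.
  by have := card_unlayered (leqnn nlayers); case: #|_| => // m; rewrite mulSn; lia.
move/eqP; rewrite cards_eq0 => /eqP no_unlayered.
have : v \notin unlayered nlayers by rewrite no_unlayered inE.
by rewrite inE lt0n.
Qed.

Lemma final_layer_le v : final_layer v <= nlayers.
Proof. exact: layer_le. Qed.

Lemma card_upper_nbrs v : #|[set u | e v u && (final_layer v <= final_layer u)]| <= deg_cap.
Proof.
set k := (final_layer v).-1.
have := final_layer_gt0 v; have := final_layer_le v => v_le v_gt0.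
have k_lt : k < nlayers by rewrite /k; lia.
have v_unl : v \in unlayered k by rewrite inE layer_eq0 ?(ltnW k_lt) // /k; lia.
have : v \notin unlayered k.+1 by rewrite inE layer_eq0 // /k; lia.
rewrite (unlayered_succ k_lt) inE v_unl /= -leqNgt; apply: leq_trans.
apply/subset_leq_card/subsetP => u; rewrite !inE => /andP[-> v_le_u].
by rewrite layer_eq0 ?(ltnW k_lt) // andbT; lia.
Qed.

Lemma st_nbr_layer_final k v i (Q : pred nat) : color_start <= k ->
  st_nbr (st k v) i && Q (st_nbr_layer (st k v) i) =
  [exists u, (e v u && Q (final_layer u)) && (id u == i)].
Proof.
case: k => // k; rewrite ltnS => L_le_k; rewrite run_succ /=.
have -> : isSome (inbox k v i) && Q (if inbox k v i is Some t then st_layer t else 0) =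
    if inbox k v i is Some t then Q (st_layer t) else false by case: (inbox k v i).
by rewrite inbox_match; apply: eq_existsb => u; rewrite layer_final.
Qed.

Lemma count_upper_nbr_ids v (P : pred nat) :
  (forall i, P i -> exists2 u, e v u && (final_layer v <= final_layer u) & id u = i) ->
  count P (iota 0 id_bound) <= deg_cap.
Proof.
move=> P_upper; apply: leq_trans (card_upper_nbrs v); rewrite -count_ids.
by apply: sub_count => i /P_upper [u up_u <-]; apply/existsP; exists u; rewrite up_u eqxx.
Qed.

Lemma id_bound_le : id_bound <= 2 ^ id_bits.
Proof.
rewrite /id_bound /id_bits mulnC expnM; case: c => // c'.
by rewrite leq_exp2r // ltnW // trunc_log_ltn.
Qed.

Lemma nbr_first_diff_bit v u : e v u ->
  first_diff_bit id_bits (id v) (id u) < id_bits /\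
  bit (id v) (first_diff_bit id_bits (id v) (id u))
    != bit (id u) (first_diff_bit id_bits (id v) (id u)).
Proof.
move=> evu; apply: first_diff_bitP; rewrite ?(leq_trans (id_lt _) id_bound_le) //.
by apply: contraTneq evu => /id_inj ->; case: e_simple => _ ->.
Qed.

Definition offer s v := offer_target s (st color_start v).

Lemma offer_bit_slot s v i : s < bit_slots -> offer s v = Some i ->
  exists u, [/\ e v u, id u = i, final_layer u = final_layer v,
    ~~ bit (id v) (s %/ deg_cap) & first_diff_bit id_bits (id v) (id u) = s %/ deg_cap].
Proof.
move=> s_lt; rewrite /offer /offer_target s_lt st_id_run (layer_final v (leqnSn _)).
case: ifP => // bit0; rewrite /nth_opt; case: ifP => // j_lt [<-].
have := mem_nth 0 j_lt; rewrite mem_filter => /andP[/andP[nbr_i diff_i] _].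
move: nbr_i; rewrite (st_nbr_layer_final _ _ (pred1 (final_layer v)) (leqnn _)).
case/existsP => u /andP[/andP[evu /eqP same_layer] /eqP ui].
by exists u; split => //; rewrite ui; apply/eqP.
Qed.

Lemma offer_layer_slot s v i : bit_slots <= s -> offer s v = Some i ->
  exists u, [/\ e v u, id u = i, (s - bit_slots) %/ deg_cap < nlayers,
    final_layer v = nlayers - (s - bit_slots) %/ deg_cap & final_layer v < final_layer u].
Proof.
move=> s_ge; rewrite /offer /offer_target ltnNge s_ge (layer_final v (leqnSn _)) /=.
case: ifP => // /andP[q_lt /eqP v_layer]; rewrite /nth_opt; case: ifP => // j_lt [<-].
have := mem_nth 0 j_lt; rewrite mem_filter => /andP[].
rewrite (st_nbr_layer_final _ _ (fun l => _ < l) (leqnn _)).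
by case/existsP => u /andP[/andP[evu up] /eqP ui] _; exists u; rewrite v_layer ui.
Qed.

Lemma offer_receiver_silent s v u : offer s v = Some (id u) -> offer s u = None.
Proof.
have [s_lt|s_ge] := ltnP s bit_slots => offer_v.
  have [u' [evu /id_inj u'u _ bit0 diff]] := offer_bit_slot s_lt offer_v.
  rewrite -u'u in diff *.
  have [_ bits_differ] := nbr_first_diff_bit evu.
  rewrite /offer /offer_target s_lt st_id_run.
  by move: bits_differ bit0; rewrite diff; case: (bit (id v) _); case: (bit (id u') _).
have [u' [_ /id_inj u'u _ v_layer v_lt]] := offer_layer_slot s_ge offer_v.
rewrite -u'u /offer /offer_target ltnNge s_ge (layer_final u' (leqnSn _)) /=.
by rewrite (_ : final_layer u' == _ = false) ?andbF //; apply/negbTE; lia.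
Qed.

(* The slots of a layer come after those of the higher layers, and the bit slots
   come first: this is what bounds the colours at a sender by [deg_cap]. *)
Lemma offer_earlier_upper s s' v u w : offer s v = Some (id u) -> s' < s -> e v w ->
  (offer s' v = Some (id w) \/ offer s' w = Some (id v)) -> final_layer v <= final_layer w.
Proof.
move=> offer_v s'_lt evw [offer'|offer'].
  have [s'_lt'|s'_ge] := ltnP s' bit_slots.
    by have [w' [_ /id_inj <- -> _ _]] := offer_bit_slot s'_lt' offer'.
  by have [w' [_ /id_inj <- _ _ /ltnW]] := offer_layer_slot s'_ge offer'.
have [s'_lt'|s'_ge] := ltnP s' bit_slots.
  by have [v' [_ /id_inj -> -> _ _]] := offer_bit_slot s'_lt' offer'.
have [v' [_ /id_inj -> _ w_layer w_lt]] := offer_layer_slot s'_ge offer'.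
have [s_lt|s_ge] := ltnP s bit_slots; first by lia.
have [u' [_ _ _ v_layer _]] := offer_layer_slot s_ge offer_v.
have : (s' - bit_slots) %/ deg_cap <= (s - bit_slots) %/ deg_cap by apply: leq_div2r; lia.
lia.
Qed.

Lemma slot_index b j : j < deg_cap -> (b * deg_cap + j) %/ deg_cap = b /\
  (b * deg_cap + j) %% deg_cap = j.
Proof.
move=> j_lt; have cap_gt0 : 0 < deg_cap by lia.
by rewrite divnMDl // divn_small ?addn0 // modnMDl modn_small.
Qed.

Lemma offer_up x y : e x y -> final_layer x < final_layer y ->
  exists2 s, s < nslots & offer s x = Some (id y).
Proof.
move=> exy x_lt_y; have x_gt0 := final_layer_gt0 x; have x_le := final_layer_le x.
pose P i := st_nbr (st color_start x) i && (final_layer x < st_nbr_layer (st color_start x) i).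
have P_E i : P i = [exists u, (e x u && (final_layer x < final_layer u)) && (id u == i)].
  exact: (st_nbr_layer_final _ _ (fun l => _ < l) (leqnn _)).
set l := filter P (iota 0 id_bound).
have y_in : id y \in l.
  rewrite mem_filter mem_iota leq0n add0n id_lt P_E !andbT.
  by apply/existsP; exists y; rewrite exy x_lt_y /=.
have l_size : size l <= deg_cap.
  rewrite size_filter; apply: (@count_upper_nbr_ids x) => i; rewrite P_E.
  by case/existsP => u /andP[/andP[exu /ltnW x_le_u] /eqP <-]; exists u; rewrite ?exu ?x_le_u.
set q := nlayers - final_layer x; set j := index (id y) l.
have j_lt : j < size l by rewrite index_mem.
have [q_slot j_slot] := slot_index q (leq_trans j_lt l_size).
exists (bit_slots + (q * deg_cap + j)).
  rewrite /nslots ltn_add2l; apply: leq_trans (_ : (q.+1) * deg_cap <= _); first by lia.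
  by rewrite leq_mul2r /q; apply/orP; right; lia.
rewrite /offer /offer_target ltnNge leq_addr addKn q_slot j_slot (layer_final x (leqnSn _)).
rewrite (_ : q < nlayers) /q ?subKn // ?eqxx /=; last by lia.
by rewrite /nth_opt -/P -/l j_lt nth_index.
Qed.

Lemma offer_within x y : e x y -> final_layer x = final_layer y ->
  ~~ bit (id x) (first_diff_bit id_bits (id x) (id y)) ->
  exists2 s, s < nslots & offer s x = Some (id y).
Proof.
move=> exy same_layer bit0.
have [b_lt _] := nbr_first_diff_bit exy.
set b := first_diff_bit id_bits (id x) (id y) in b_lt bit0 *.
pose P i := st_nbr (st color_start x) i
  && (st_nbr_layer (st color_start x) i == final_layer x)
  && (first_diff_bit id_bits (id x) i == b).
have P_E i : st_nbr (st color_start x) i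
    && (st_nbr_layer (st color_start x) i == final_layer x) =
    [exists u, (e x u && (final_layer u == final_layer x)) && (id u == i)].
  exact: (st_nbr_layer_final _ _ (pred1 (final_layer x)) (leqnn _)).
set l := filter P (iota 0 id_bound).
have y_in : id y \in l.
  rewrite mem_filter /P P_E eqxx mem_iota leq0n add0n id_lt !andbT.
  by apply/existsP; exists y; rewrite exy same_layer !eqxx.
have l_size : size l <= deg_cap.
  rewrite size_filter; apply: (@count_upper_nbr_ids x) => i /andP[]; rewrite P_E.
  case/existsP => u /andP[/andP[exu /eqP u_layer] /eqP <-] _.
  by exists u; rewrite ?exu ?u_layer ?leqnn.
set j := index (id y) l.
have j_lt : j < size l by rewrite index_mem.
have [b_slot j_slot] := slot_index b (leq_trans j_lt l_size).
have s_lt : b * deg_cap + j < bit_slots.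
  by apply: leq_trans (_ : b.+1 * deg_cap <= _); [lia | rewrite leq_mul2r b_lt orbT].
exists (b * deg_cap + j); first by apply: leq_trans s_lt (leq_addr _ _).
rewrite /offer /offer_target s_lt b_slot j_slot st_id_run bit0 (layer_final x (leqnSn _)).
by rewrite /nth_opt -/P -/l j_lt nth_index.
Qed.

Lemma offer_covers v w : e v w -> exists2 s, s < nslots &
  (offer s v = Some (id w) \/ offer s w = Some (id v)).
Proof.
move=> evw; have ewv := edge_sym evw.
have [v_lt|w_lt|same_layer] := ltngtP (final_layer v) (final_layer w).
- by have [s ? ?] := offer_up evw v_lt; exists s => //; left.
- by have [s ? ?] := offer_up ewv w_lt; exists s => //; right.
have [_ bits_differ] := nbr_first_diff_bit evw.
set b := first_diff_bit id_bits (id v) (id w) in bits_differ.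
have [bit_v|bit_v] := boolP (bit (id v) b).
- have bit_w : ~~ bit (id w) (first_diff_bit id_bits (id w) (id v)).
    by rewrite first_diff_bitC -/b; move: bits_differ; rewrite bit_v; case: (bit (id w) b).
  by have [s ? ?] := offer_within ewv (esym same_layer) bit_w; exists s => //; right.
- by have [s ? ?] := offer_within evw same_layer bit_v; exists s => //; left.
Qed.

Lemma offer_target_stable k s v : color_start <= k -> offer_target s (st k v) = offer s v.
Proof.
move=> k_ge; rewrite /offer /offer_target !st_id_run.
rewrite (layer_final v (ltnW k_ge)) (layer_final v (leqnSn _)).
case: ifP => _; [case: ifP => // _ | case: ifP => // _]; congr nth_opt; apply: eq_filter => i.
  by rewrite !(st_nbr_layer_final _ _ (pred1 (final_layer v))) ?leqnn.
by rewrite !(st_nbr_layer_final _ _ (fun l => _ < l)) ?leqnn.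
Qed.

Definition slot_round s := color_start + 2 * s.

Lemma st_color_early k v i : k <= color_start -> st_color (st k v) i = None.
Proof.
by elim: k => // k IH k_lt; rewrite run_succ /= st_round_run k_lt IH // ltnW.
Qed.

Lemma st_color_succ k v : color_start <= k -> st_color (st k.+1 v) =
  if odd (k - color_start) then copy_colors (st k v) (inbox k v)
  else accept_offers (k - color_start)./2 (st k v) (inbox k v).
Proof. by move=> k_ge; rewrite run_succ /= st_round_run ltnNge k_ge. Qed.

Lemma st_color_accept s v : st_color (st (slot_round s).+1 v) =
  accept_offers s (st (slot_round s) v) (inbox (slot_round s) v).
Proof. by rewrite /slot_round st_color_succ ?leq_addr // addKn mul2n odd_double doubleK. Qed.

Lemma st_color_copy s v : st_color (st (slot_round s).+2 v) =
  copy_colors (st (slot_round s).+1 v) (inbox (slot_round s).+1 v).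
Proof. by rewrite /slot_round -addnS st_color_succ ?leq_addr // addKn /= mul2n odd_double. Qed.

Definition colors s v i := st_color (st (slot_round s) v) i.
Definition accepted s v i := st_color (st (slot_round s).+1 v) i.
Definition new_offer s v u := (offer s u == Some (id v)) && (colors s v (id u) == None).

Definition colors_on_nbrs s := forall v i, colors s v i != None -> is_nbr_id v i.
Definition colors_sym s := forall v u, e v u -> colors s v (id u) = colors s u (id v).
Definition colored_iff_offered s := forall v u, e v u ->
  colors s v (id u) != None <->
  exists2 s', s' < s & offer s' v = Some (id u) \/ offer s' u = Some (id v).
Definition colors_proper s := forall v u w x, e v u -> e v w -> u != w ->
  colors s v (id u) = Some x -> colors s v (id w) != Some x.
Definition colors_bounded s := forall v i x, colors s v i = Some x -> x <= Delta + deg_cap.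

Lemma colors_start : [/\ colors_on_nbrs 0, colors_sym 0, colored_iff_offered 0,
  colors_proper 0 & colors_bounded 0].
Proof.
have none v i : colors 0 v i = None by rewrite /colors st_color_early // /slot_round addn0.
split=> [v i|v u _|v u _|v u w x _ _ _|v i x]; rewrite ?none //.
by split=> // -[].
Qed.

Lemma offers_to_mem s v i : i \in offers_to s (st (slot_round s) v) (inbox (slot_round s) v) =
  [exists u, (e v u && new_offer s v u) && (id u == i)].
Proof.
rewrite mem_filter inbox_match mem_iota leq0n add0n andTb.
apply/andP/existsP.
  case=> /existsP[u /andP[/andP[evu offered] /eqP ui]] _; exists u.
  move: offered; rewrite offer_target_stable ?leq_addr // st_id_run -ui => offered.
  by rewrite evu ui eqxx andbT.
case=> u /andP[/andP[evu offered] /eqP <-]; split; last exact: id_lt.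
apply/existsP; exists u; rewrite evu eqxx andbT offer_target_stable ?leq_addr //.
by rewrite st_id_run; exact: offered.
Qed.

Lemma nbr_used_colors_nbr k v u : e v u ->
  nbr_used_colors (inbox k v) (id u) = used_colors id_bound (st_color (st k u)).
Proof. by move=> evu; rewrite /nbr_used_colors inbox_nbr. Qed.

Local Notation offers s v := (offers_to s (st (slot_round s) v) (inbox (slot_round s) v)).

Lemma offers_to_uniq s v : uniq (offers s v).
Proof. exact/filter_uniq/iota_uniq. Qed.

Lemma offers_to_lt s v j : j \in offers s v -> j < id_bound.
Proof. by rewrite mem_filter mem_iota add0n => /andP[_ /andP[_ ->]]. Qed.

Lemma new_offer_asym s v u : new_offer s v u -> new_offer s u v = false.
Proof. by case/andP => /eqP /offer_receiver_silent silent _; rewrite /new_offer silent. Qed.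

Section Slot.
Variable s : nat.
Hypotheses (on_nbrs : colors_on_nbrs s) (sym : colors_sym s)
  (iff_offered : colored_iff_offered s) (proper : colors_proper s)
  (bounded : colors_bounded s).

Lemma accepted_old v i : ~~ [exists u, (e v u && new_offer s v u) && (id u == i)] ->
  accepted s v i = colors s v i.
Proof.
by move=> not_offered; rewrite /accepted st_color_accept /accept_offers greedy_notin ?offers_to_mem.
Qed.

Lemma accepted_old_nbr v u : e v u -> ~~ new_offer s v u ->
  accepted s v (id u) = colors s v (id u).
Proof.
move=> evu not_new; apply: accepted_old; apply/existsPn => u'.
by apply: contraNN not_new => /andP[/andP[_ new] /eqP /id_inj <-].
Qed.

Lemma sender_used_colors_le v u : new_offer s v u ->
  size (used_colors id_bound (colors s u)) <= deg_cap.
Proof.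
case/andP => /eqP offer_u _; rewrite /used_colors size_pmap.
apply: (@count_upper_nbr_ids u) => i /= colored.
have u_colored : colors s u i != None by case: (colors s u i) colored.
have /existsP[w /andP[euw /eqP wi]] := on_nbrs u_colored.
have [|s' s'_lt offered] := (iff_offered euw).1; first by rewrite wi.
by exists w; rewrite ?euw ?(offer_earlier_upper offer_u s'_lt euw offered).
Qed.

Lemma accepted_new v u : e v u -> new_offer s v u -> exists x,
  [/\ accepted s v (id u) = Some x, x \notin used_colors id_bound (colors s u),
      x <= Delta + deg_cap & forall j, j < id_bound -> j != id u -> accepted s v j != Some x].
Proof.
move=> evu new.
have u_in : id u \in offers s v.
  by rewrite offers_to_mem; apply/existsP; exists u; rewrite evu new eqxx.
have [x [acc_u x_fresh x_le x_unique]] :=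
  greedy_spec (nbr_used_colors (inbox (slot_round s) v)) (st_color (st (slot_round s) v))
    (offers_to_uniq s v) (@offers_to_lt s v) u_in.
rewrite nbr_used_colors_nbr // in x_fresh x_le.
exists x; rewrite /accepted st_color_accept; split => //; apply: leq_trans x_le _.
apply: leq_add; last exact: sender_used_colors_le new.
apply: leq_trans (count_nbr_ids_le v); apply: sub_count => i /= colored.
have [|i_notin] := boolP (i \in offers s v).
  rewrite offers_to_mem => /existsP[w /andP[/andP[evw _] wi]].
  by apply/existsP; exists w; rewrite evw wi.
by apply: on_nbrs; move: colored; rewrite greedy_notin.
Qed.

Lemma colors_succ v i : colors s.+1 v i =
  if accepted s v i is Some x then Some x
  else if inbox (slot_round s).+1 v i is Some t then st_color t (id v) else None.
Proof.
rewrite /colors (_ : slot_round s.+1 = (slot_round s).+2); last by rewrite /slot_round; lia.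
by rewrite st_color_copy /copy_colors st_id_run.
Qed.

Lemma colors_succ_non_nbr v i : ~~ is_nbr_id v i -> colors s.+1 v i = None.
Proof.
move=> not_nbr; rewrite colors_succ.
have -> : inbox (slot_round s).+1 v i = None.
  by move: not_nbr; rewrite -(inbox_is_nbr_id (slot_round s).+1); case: inbox.
rewrite accepted_old; last first.
  apply/existsPn => u; apply: contraNN not_nbr => /andP[/andP[evu _] ui].
  by apply/existsP; exists u; rewrite evu.
by case E: (colors s v i) => //; move: not_nbr; rewrite on_nbrs ?E.
Qed.

Lemma colors_succ_nbr v u : e v u -> colors s.+1 v (id u) =
  if new_offer s v u then accepted s v (id u)
  else if new_offer s u v then accepted s u (id v) else colors s v (id u).
Proof.
move=> evu; have euv := edge_sym evu.
rewrite colors_succ inbox_nbr // -/(accepted s u (id v)).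
have [new_vu|old_vu] := boolP (new_offer s v u).
  by have [x [-> _ _ _]] := accepted_new evu new_vu.
rewrite (accepted_old_nbr evu old_vu) sym //.
have [/andP[_ /eqP ->] //|old_uv] := boolP (new_offer s u v).
by rewrite (accepted_old_nbr euv old_uv); case: (colors s u (id v)).
Qed.

Lemma colors_on_nbrs_succ : colors_on_nbrs s.+1.
Proof. by move=> v i; have [//|not_nbr] := boolP (is_nbr_id v i); rewrite colors_succ_non_nbr. Qed.

Lemma colors_sym_succ : colors_sym s.+1.
Proof.
move=> v u evu; rewrite (colors_succ_nbr evu) (colors_succ_nbr (edge_sym evu)).
have [new_vu|_] := boolP (new_offer s v u); first by rewrite (new_offer_asym new_vu).
by case: (new_offer s u v) => //; apply: sym.
Qed.

Lemma colored_iff_offered_succ : colored_iff_offered s.+1.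
Proof.
move=> v u evu; rewrite (colors_succ_nbr evu).
have [new_vu|old_vu] := boolP (new_offer s v u).
  have [x [-> _ _ _]] := accepted_new evu new_vu; split => // _.
  by exists s => //; right; case/andP: new_vu => /eqP.
have [new_uv|old_uv] := boolP (new_offer s u v).
  have [x [-> _ _ _]] := accepted_new (edge_sym evu) new_uv; split => // _.
  by exists s => //; left; case/andP: new_uv => /eqP.
split=> [/(iff_offered evu).1 [s' s'_lt offered]|[s']]; first by exists s' => //; apply: ltnW.
rewrite ltnS leq_eqVlt => /orP[/eqP -> [offer_v|offer_u]|s'_lt offered].
- by move: old_uv; rewrite /new_offer offer_v eqxx -(sym evu).
- by move: old_vu; rewrite /new_offer offer_u eqxx.
- by apply/(iff_offered evu).2; exists s'.
Qed.

Lemma proper_after_receive v u w x : e v u -> e v w -> u != w -> new_offer s v u ->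
  colors s.+1 v (id u) = Some x -> colors s.+1 v (id w) != Some x.
Proof.
move=> evu evw uw new_vu.
have [x' [acc_u _ _ x'_unique]] := accepted_new evu new_vu.
rewrite (colors_succ_nbr evu) (colors_succ_nbr evw) new_vu acc_u => -[<-] {x}.
have wu : id w != id u by apply: contra_neq uw => /id_inj.
have [new_vw|old_vw] := boolP (new_offer s v w); first exact: x'_unique (id_lt w) wu.
have [/andP[/eqP offer_v _]|_] := boolP (new_offer s w v).
  by case/andP: new_vu => /eqP /offer_receiver_silent; rewrite offer_v.
by rewrite -(accepted_old_nbr evw old_vw); apply: x'_unique (id_lt w) wu.
Qed.

Lemma proper_after_send v u w x : e v u -> e v w -> u != w -> new_offer s u v ->
  colors s.+1 v (id u) = Some x -> colors s.+1 v (id w) != Some x.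
Proof.
move=> evu evw uw new_uv.
have [x' [acc_v x'_notin _ _]] := accepted_new (edge_sym evu) new_uv.
rewrite (colors_succ_nbr evu) (colors_succ_nbr evw) (new_offer_asym new_uv) new_uv acc_v.
case=> <- {x}.
have [/andP[/eqP offer_w _]|_] := boolP (new_offer s v w).
  by case/andP: new_uv => /eqP; rewrite (offer_receiver_silent offer_w).
have [/andP[/eqP offer_v _]|_] := boolP (new_offer s w v).
  by case/andP: new_uv => /eqP; rewrite offer_v => -[/id_inj wu]; rewrite wu eqxx in uw.
apply: contraNneq x'_notin => colored_w; rewrite /used_colors mem_pmap.
by apply/mapP; exists (id w); rewrite ?mem_iota ?add0n ?id_lt ?colored_w.
Qed.

Lemma colors_proper_succ : colors_proper s.+1.
Proof.
move=> v u w x evu evw uw.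
have [|old_u] := boolP (new_offer s v u || new_offer s u v).
  by case/orP=> new_u; [apply: proper_after_receive evu evw uw new_u
    | apply: proper_after_send evu evw uw new_u].
have [new_w|old_w] := boolP (new_offer s v w || new_offer s w v).
  move=> col_u; rewrite eq_sym in uw; apply/eqP => col_w.
  suff : colors s.+1 v (id u) != Some x by rewrite col_u eqxx.
  by case/orP: new_w => new_w; [apply: proper_after_receive evw evu uw new_w col_w
    | apply: proper_after_send evw evu uw new_w col_w].
move: old_u old_w; rewrite !negb_or (colors_succ_nbr evu) (colors_succ_nbr evw).
by case/andP=> /negbTE-> /negbTE-> /andP[/negbTE-> /negbTE->]; apply: proper.
Qed.

Lemma colors_bounded_succ : colors_bounded s.+1.
Proof.
move=> v i x; have [|not_nbr] := boolP (is_nbr_id v i); last by rewrite colors_succ_non_nbr.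
case/existsP=> u /andP[evu /eqP <-]; rewrite (colors_succ_nbr evu).
have [new_vu|_] := boolP (new_offer s v u).
  by have [x' [-> _ x'_le _]] := accepted_new evu new_vu => -[<-].
have [new_uv|_] := boolP (new_offer s u v); last exact: bounded.
by have [x' [-> _ x'_le _]] := accepted_new (edge_sym evu) new_uv => -[<-].
Qed.

End Slot.

Lemma coloring_invariants s : [/\ colors_on_nbrs s, colors_sym s, colored_iff_offered s,
  colors_proper s & colors_bounded s].
Proof.
elim: s => [|s [? ? ? ? ?]]; first exact: colors_start.
by split; [apply: colors_on_nbrs_succ | apply: colors_sym_succ | apply: colored_iff_offered_succ
  | apply: colors_proper_succ | apply: colors_bounded_succ].
Qed.

Lemma edge_coloring_alg_proper :
  proper_edge_coloring e (edge_col edge_coloring_alg e id nrounds) (Delta + deg_cap).+1.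
Proof.
have [_ sym iff_offered proper bounded] := coloring_invariants nslots.
have col_E v u : edge_col edge_coloring_alg e id nrounds v u =
  if colors nslots v (id u) is Some x then x else 0 by [].
have colored v u : e v u -> exists x, colors nslots v (id u) = Some x.
  move=> evu; have [s s_lt offered] := offer_covers evu.
  have : colors nslots v (id u) != None by apply/(iff_offered v u evu).2; exists s.
  by case: (colors nslots v (id u)) => // x _; exists x.
split=> [u v euv|u v euv|u v w euv euw vw].
- by rewrite !col_E sym.
- by have [x col_x] := colored _ _ euv; rewrite col_E col_x ltnS (bounded _ _ _ col_x).
have [x col_x] := colored _ _ euv; have [y col_y] := colored _ _ euw.
rewrite !col_E col_x col_y; apply/eqP => xy.
by move: (proper _ _ _ _ euv euw vw col_x); rewrite col_y xy eqxx.
Qed.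

End Run.
End Algorithm.

Lemma nrounds_le n a c : 0 < a -> 1 < n ->
  nrounds n a c <= (16 * c + 20) * (a * trunc_log 2 n).
Proof.
move=> a_gt0 n_gt1; rewrite /nrounds /color_start /nslots /bit_slots /id_bits /deg_cap /nlayers.
have : 0 < trunc_log 2 n by rewrite trunc_log_gt0.
by move: (trunc_log 2 n) => l l_gt0; nia.
Qed.

Lemma proper_edge_coloring_edgeless n (e : rel 'I_n) col q :
  (forall u v, ~~ e u v) -> proper_edge_coloring e col q.
Proof. by move=> no_edge; split=> u v; rewrite (negbTE (no_edge u v)). Qed.

Lemma proper_edge_coloring_leq n (e : rel 'I_n) col q q' : q <= q' ->
  proper_edge_coloring e col q -> proper_edge_coloring e col q'.
Proof. by move=> q_le [? col_lt ?]; split=> // u v euv; apply: leq_trans (col_lt u v euv) q_le. Qed.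

Lemma degenerate_edgeless n a (e : rel 'I_n) : simple_graph e -> forest_decomp e a ->
  ~~ ((0 < a) && (1 < n)) -> forall u v, ~~ e u v.
Proof.
move=> [_ e_irr] [f [f_ok _]] degenerate u v; apply/negP => euv.
move: degenerate; rewrite negb_and -!leqNgt => /orP[|n_le1].
  by rewrite leqn0 => /eqP a0; have [_] := f_ok _ _ euv; rewrite a0.
have uv : u = v by apply: ord_inj; have := ltn_ord u; have := ltn_ord v; lia.
by rewrite uv e_irr in euv.
Qed.

Theorem mainTheorem12 :
  forall c : nat, exists C : nat, forall n Delta a : nat,
    exists (A : LocalAlg) (R : nat),
      R <= C * (a * trunc_log 2 n) /\
      forall (e : rel 'I_n) (id : 'I_n -> nat),
        simple_graph e -> injective id -> (forall v, id v < n ^ c) ->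
        maxdeg e = Delta -> arboricity e a ->
        proper_edge_coloring e (edge_col A e id R) (Delta + C * a).
Proof.
move=> c; exists (16 * c + 20) => n Delta a; exists (edge_coloring_alg n a c).
have [/andP[a_gt0 n_gt1]|degenerate] := boolP ((0 < a) && (1 < n)).
  exists (nrounds n a c); split; first exact: nrounds_le.
  move=> e id e_simple id_inj id_lt maxdeg_e [e_forests _].
  apply: proper_edge_coloring_leq
    (edge_coloring_alg_proper e_simple id_inj id_lt maxdeg_e e_forests a_gt0).
  by rewrite /deg_cap; nia.
exists 0; split=> // e id e_simple _ _ _ [e_forests _].
exact/proper_edge_coloring_edgeless/(degenerate_edgeless e_simple e_forests degenerate).
Qed.
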